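(* Let $F\colon\mathsf{Set}\to\mathsf{Set}$ preserve intersections and let $c\colon C\to FC$ be an $F$-coalgebra. Then $\ominus_c=\ominus_{\tau_C\cdot c}$ as operators on the set of subsets of $C$, where the right-hand side is computed for the power-set functor $\mathcal P$ and the canonical graph $\tau_C\cdot c\colon C\to\mathcal P C$.
   Context: On $\mathsf{Set}$ use the factorization system (surjective, injective); subobjects are subsets. $F$ preserves intersections means $F$ preserves injective maps and intersections (wide pullbacks of injective maps). For a functor $H$ preserving intersections and a map $f\colon X\to HY$, $\ominus_f(S)$ for $S\subseteq X$ is the least subset $Z\subseteq Y$ such that $f$ restricted to $S$ factors through $Hm\colon HZ\to HY$, $m$ the inclusion. $\mathcal P$ is the power-set functor. For each set $X$, $\tau_X\colon FX\to\mathcal P X$ is given by $\tau_X(t)=\{x\in X\mid t\notin Fi[F(X\setminus\{x\})]\}$ with $i\colon X\setminus\{x\}\hookrightarrow X$ the inclusion; $\tau_C\cdot c$ is the canonical graph of $(C,c)$. *)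

From Stdlib Require Import FunctionalExtensionality PropExtensionality.

Record SetFunctor := {
  Fob :> Type -> Type;
  Fmap : forall X Y : Type, (X -> Y) -> Fob X -> Fob Y;
  Fmap_id : forall (X : Type) (t : Fob X), Fmap X X (fun x => x) t = t;
  Fmap_comp : forall (X Y Z : Type) (f : X -> Y) (g : Y -> Z) (t : Fob X),
      Fmap Y Z g (Fmap X Y f t) = Fmap X Z (fun x => g (f x)) t
}.

Arguments Fmap s {X Y} f t.

Definition incl {X : Type} (S : X -> Prop) : {x : X | S x} -> X :=
  fun u => proj1_sig u.

Definition Fimg (F : SetFunctor) {X : Type} (S : X -> Prop) (t : F X) : Prop :=
  exists u : F {x : X | S x}, Fmap F (incl S) u = t.

Definition injective {A B : Type} (f : A -> B) : Prop :=
  forall a a', f a = f a' -> a = a'.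

Definition preserves_intersections (F : SetFunctor) : Prop :=
  (forall (X Y : Type) (m : X -> Y), injective m -> injective (Fmap F m)) /\
  (forall (X I : Type) (S : I -> X -> Prop) (t : F X),
      Fimg F (fun x => forall i, S i x) t <-> (forall i, Fimg F (S i) t)).

Definition factors_through (H : SetFunctor) {X Y : Type} (f : X -> H Y)
  (S : X -> Prop) (Z : Y -> Prop) : Prop :=
  forall x, S x -> Fimg H Z (f x).

Definition is_ominus (H : SetFunctor) {X Y : Type} (f : X -> H Y)
  (S : X -> Prop) (Z : Y -> Prop) : Prop :=
  factors_through H f S Z /\
  (forall Z' : Y -> Prop, factors_through H f S Z' -> forall y, Z y -> Z' y).

Definition pset_map {X Y : Type} (f : X -> Y) (A : X -> Prop) : Y -> Prop :=
  fun y => exists x, A x /\ f x = y.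

Lemma pset_map_id (X : Type) (A : X -> Prop) : pset_map (fun x => x) A = A.
Proof.
  apply functional_extensionality; intro y; apply propositional_extensionality.
  unfold pset_map; split; [intros [x [Hx <-]]; exact Hx | intro H; exists y; auto].
Qed.

Lemma pset_map_comp (X Y Z : Type) (f : X -> Y) (g : Y -> Z) (A : X -> Prop) :
  pset_map g (pset_map f A) = pset_map (fun x => g (f x)) A.
Proof.
  apply functional_extensionality; intro z; apply propositional_extensionality.
  unfold pset_map; split.
  - intros [y [[x [Hx <-]] <-]]; exists x; auto.
  - intros [x [Hx <-]]; exists (f x); split; [exists x; auto | reflexivity].
Qed.

Definition Pow : SetFunctor :=
  {| Fob := fun X => X -> Prop;
     Fmap := fun X Y f A => pset_map f A;
     Fmap_id := pset_map_id;
     Fmap_comp := pset_map_comp |}.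

Definition tau (F : SetFunctor) (X : Type) (t : F X) : Pow X :=
  fun x => ~ Fimg F (fun y => y <> x) t.

From Stdlib Require Import Classical FunctionalExtensionality PropExtensionality.

(* Because F preserves intersections, every t : F X lies in the image of F
   applied to its support tau_X(t), the intersection of all X \ {x} through
   which t factors; hence t factors through Z exactly when tau_X(t) is
   contained in Z.  So a subset Z admits a factorisation of c restricted to S
   through F Z iff it admits one of tau_C . c through P Z, and both least
   such subsets are the union of the tau_C(c x), x in S. *)

Lemma Fimg_mono (F : SetFunctor) {X : Type} (A B : X -> Prop) (t : F X) :
  (forall x, A x -> B x) -> Fimg F A t -> Fimg F B t.
Proof.
  intros HAB [u Hu].
  exists (Fmap F (fun v : {x : X | A x} => exist B (proj1_sig v) (HAB _ (proj2_sig v))) u).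
  rewrite Fmap_comp. exact Hu.
Qed.

Lemma Fimg_tau (F : SetFunctor) (HF : preserves_intersections F)
  (X : Type) (t : F X) :
  Fimg F (tau F X t) t.
Proof.
  destruct HF as [_ Hcap].
  set (I := {y : X | ~ tau F X t y}).
  assert (Hall : Fimg F (fun z => forall i : I, z <> proj1_sig i) t).
  { apply (Hcap X I (fun i z => z <> proj1_sig i) t).
    intros [y Hy]; simpl. unfold tau in Hy. now apply NNPP. }
  apply (Fimg_mono F _ _ t) with (2 := Hall).
  intros z Hz. apply NNPP. intro Hnz. exact (Hz (exist _ z Hnz) eq_refl).
Qed.

Lemma Fimg_iff_tau_sub (F : SetFunctor) (HF : preserves_intersections F)
  (X : Type) (Z : X -> Prop) (t : F X) :
  Fimg F Z t <-> (forall x, tau F X t x -> Z x).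
Proof.
  split.
  - intros HZ x Hx. apply NNPP. intro HnZ.
    apply Hx. apply (Fimg_mono F Z); [|exact HZ].
    intros z Hz ->. contradiction.
  - intro Hsub. exact (Fimg_mono F _ _ t Hsub (Fimg_tau F HF X t)).
Qed.

Lemma Fimg_Pow {X : Type} (Z A : X -> Prop) :
  Fimg Pow Z A <-> (forall x, A x -> Z x).
Proof.
  split.
  - intros [u <-] x [v [_ <-]]. exact (proj2_sig v).
  - intro Hsub. exists (fun v : {x : X | Z x} => A (proj1_sig v)).
    apply functional_extensionality; intro y; apply propositional_extensionality.
    split.
    + now intros [v [Hv <-]].
    + intro Hy. now exists (exist Z y (Hsub y Hy)).
Qed.

Lemma factors_through_tau (F : SetFunctor) (HF : preserves_intersections F)
  (C : Type) (c : C -> F C) (S Z : C -> Prop) :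
  factors_through F c S Z <-> factors_through Pow (fun x => tau F C (c x)) S Z.
Proof.
  unfold factors_through. split; intros Hfac x Hx.
  - apply Fimg_Pow. apply Fimg_iff_tau_sub; auto.
  - apply (Fimg_iff_tau_sub F HF). apply Fimg_Pow; auto.
Qed.

Lemma is_ominus_ext (H H' : SetFunctor) {X Y : Type}
  (f : X -> H Y) (g : X -> H' Y) (S : X -> Prop) (Z : Y -> Prop) :
  (forall Z', factors_through H f S Z' <-> factors_through H' g S Z') ->
  is_ominus H f S Z -> is_ominus H' g S Z.
Proof.
  intros Hfg [Hfac Hleast]. split.
  - now apply Hfg.
  - intros Z' HZ'. apply Hleast. now apply Hfg.
Qed.

Lemma is_ominus_Pow {X Y : Type} (f : X -> Pow Y) (S : X -> Prop) :
  is_ominus Pow f S (fun y => exists x, S x /\ f x y).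
Proof.
  split.
  - intros x Hx. apply Fimg_Pow. intros y Hy. now exists x.
  - intros Z' HZ' y [x [Hx Hy]]. exact (proj1 (Fimg_Pow Z' (f x)) (HZ' x Hx) y Hy).
Qed.

Theorem proposition5p16 (F : SetFunctor) (HF : preserves_intersections F)
  (C : Type) (c : C -> F C) :
  forall S : C -> Prop, exists Z : C -> Prop,
    is_ominus F c S Z /\ is_ominus Pow (fun x => tau F C (c x)) S Z.
Proof.
  intro S.
  pose proof (is_ominus_Pow (fun x => tau F C (c x)) S) as Hgraph.
  eexists; split; [|exact Hgraph].
  apply (is_ominus_ext Pow F (fun x => tau F C (c x)) c); [|exact Hgraph].
  intro Z'. symmetry. apply factors_through_tau, HF.
Qed.
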